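(* Let $\mathcal{F}=C_1\wedge\dots\wedge C_m\sim\mathcal{F}(m,n,d)$ and define the $2^n\times m$ matrix $M$ whose rows are indexed by assignments $\alpha\in\{0,1\}^n$ and columns by clause indices $i\in[m]$, with $M[\alpha,i]=1$ if the $i$th clause is not satisfied by $\alpha$ and $M[\alpha,i]=0$ otherwise. For any $c>2/\log e$, if $m\ge c\,2^d n^2/d$, then the rows of $M$ are pairwise distinct with high probability.
   Context: $\log$ is base 2. $\mathcal{F}(m,n,d)$: random $d$-CNF on $n$ variables with $m$ clauses sampled independently and uniformly with replacement from the $\binom{n}{d}2^d$ clauses on $d$ distinct variables. ''With high probability'' means with probability tending to $1$ as $n\to\infty$. *)

From HB Require Import structures.
From mathcomp Require Import all_boot all_order all_algebra.
From mathcomp Require Import all_classical all_reals all_analysis.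
Set Implicit Arguments. Unset Strict Implicit. Unset Printing Implicit Defensive.
Import Order.TTheory GRing.Theory Num.Theory.
Local Open Scope ring_scope.

(* A clause on n variables: c i = None if variable i does not occur,
   c i = Some b if the literal on variable i is x_i (b = true) or ~x_i (b = false). *)
Definition raw_clause (n : nat) := {ffun 'I_n -> option bool}.

Definition is_dclause (n d : nat) (c : raw_clause n) : bool :=
  #|[set i | c i != None]| == d.

Definition assignment (n : nat) := {ffun 'I_n -> bool}.

Definition sat_clause (n : nat) (c : raw_clause n) (alpha : assignment n) : bool :=
  [exists i, c i == Some (alpha i)].

(* A formula with m clauses (ordered, with repetition). *)
Definition formula (n m : nat) := {ffun 'I_m -> raw_clause n}.

Definition is_dformula (n m d : nat) (F : formula n m) : bool :=
  [forall i, is_dclause d (F i)].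

Definition unsat_matrix (n m : nat) (F : formula n m) (alpha : assignment n) (i : 'I_m) : bool :=
  ~~ sat_clause (F i) alpha.

Definition rows_distinct (n m : nat) (F : formula n m) : bool :=
  [forall alpha : assignment n, forall beta : assignment n,
     (alpha != beta) ==> ([ffun i => unsat_matrix F alpha i] != [ffun i => unsat_matrix F beta i])].

(* Probability under F(m,n,d): uniform over m-tuples of d-clauses. *)
Definition prob_rows_distinct (R : realType) (n m d : nat) : R :=
  (#|[set F : formula n m | is_dformula d F && rows_distinct F]|%:R /
   #|[set F : formula n m | is_dformula d F]|%:R).

Definition log2 (R : realType) (x : R) : R := ln x / ln 2.

(* Rows a != b of M coincide only if no clause separates a and b. If a and b differ at
   variable i, every d-clause through i falsified by a or by b separates them: these are
   2 C(n-1,d-1) of the at most 2^d C(n,d) d-clauses, a fraction 2d/(n 2^d). So a fixed pair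
   survives m independent clauses with probability at most exp(-2dm/(n 2^d)) <= exp(-2cn),
   and the union bound over the 4^n pairs leaves a failure probability at most
   (4 exp(-2c))^n, which tends to 0 since c > 2 ln 2. *)

From mathcomp Require Import all_boot all_order all_algebra.
From mathcomp Require Import all_classical all_reals all_analysis.
From mathcomp Require Import unstable ring lra zify.
Import Order.TTheory GRing.Theory Num.Theory.
Import numFieldNormedType.Exports.
Set Implicit Arguments. Unset Strict Implicit. Unset Printing Implicit Defensive.

Section Clauses.
Variables n d : nat.
Implicit Types (a b : assignment n) (S : {set 'I_n}).

Definition dclauses : {set raw_clause n} := [set c | is_dclause d c].

Definition clause_vars (c : raw_clause n) : {set 'I_n} := [set j | c j != None].

Definition falsifying_clause (a : assignment n) (S : {set 'I_n}) : raw_clause n :=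
  [ffun j => if j \in S then Some (~~ a j) else None].

Lemma clause_vars_falsifying_clause a S : clause_vars (falsifying_clause a S) = S.
Proof. by apply/setP => j; rewrite !inE ffunE; case: (j \in S). Qed.

Lemma falsifying_clause_unsat a S : ~~ sat_clause (falsifying_clause a S) a.
Proof.
rewrite negb_exists; apply/forallP => j; rewrite ffunE.
by case: (j \in S); case: (a j).
Qed.

Lemma falsifying_clause_sat a b S i :
  i \in S -> a i != b i -> sat_clause (falsifying_clause a S) b.
Proof.
move=> iS abi; apply/existsP; exists i; rewrite ffunE iS.
by move: abi; case: (a i); case: (b i).
Qed.

(* A clause is determined by its variables and the subset of them occurring positively. *)
Lemma card_dclauses_le : #|dclauses| <= 2 ^ d * 'C(n, d).
Proof.
pose code (c : raw_clause n) := (clause_vars c, [set j | c j == Some true]).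
have code_inj : injective code.
  move=> c1 c2 [/setP E1 /setP E2]; apply/ffunP => j.
  by move: (E1 j) (E2 j); rewrite !inE; case: (c1 j) => [[]|]; case: (c2 j) => [[]|].
pose codes := [set p : {set 'I_n} * {set 'I_n} | (#|p.1| == d) && (p.2 \subset p.1)].
have card_codes : #|codes| = 2 ^ d * 'C(n, d).
  rewrite -sum1_card; under eq_bigl => p do rewrite inE.
  rewrite -(pair_big_dep (fun S => #|S| == d) (fun S T : {set 'I_n} => T \subset S)
    (fun _ _ => 1)) /=.
  rewrite (eq_bigr (fun _ => 2 ^ d)) => [|S /eqP <-].
    by rewrite sum_nat_cond_const card_draws card_ord mulnC.
  by rewrite -card_powerset -sum1_card; apply: eq_bigl => T; rewrite powersetE.
rewrite -card_codes -(card_imset _ code_inj); apply: subset_leq_card.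
apply/fintype.subsetP => _ /imsetP [c + ->]; rewrite !inE => /eqP cd.
rewrite /= cd eqxx; apply/fintype.subsetP => j; rewrite !inE; by case: (c j).
Qed.

Definition separating_clauses a b : {set raw_clause n} :=
  [set c in dclauses | sat_clause c a != sat_clause c b].

(* Every d-set of variables through i carries one clause falsified by a and one
   falsified by b. *)
Lemma card_separating_clauses a b i : 0 < d -> a i != b i ->
  2 * 'C(n.-1, d.-1) <= #|separating_clauses a b|.
Proof.
move=> d_gt0 abi.
pose T := {j : 'I_n | j != i}.
pose through_i (A : {set T}) : {set 'I_n} := i |: [set val x | x in A].
pose clause (p : bool * {set T}) := falsifying_clause (if p.1 then a else b) (through_i p.2).
pose dom := finset.setX [set: bool] [set A : {set T} | #|A| == d.-1].
have card_dom : #|dom| = 2 * 'C(n.-1, d.-1).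
  by rewrite cardsX cardsT card_bool card_draws card_sig cardC1 card_ord.
have i_notin (A : {set T}) : i \notin [set val x | x in A].
  by apply/imsetP => -[x _ ix]; move: (valP x); rewrite -ix eqxx.
have card_through_i (A : {set T}) : #|through_i A| = #|A|.+1.
  by rewrite cardsU1 i_notin card_imset //; apply: val_inj.
have clause_inj : {in dom &, injective clause}.
  move=> [s1 A1] [s2 A2] _ _ /= E.
  have := congr1 (fun c : raw_clause n => c i) E; rewrite /= !ffunE !setU11 => Ei.
  have s12 : s1 = s2 by move: Ei abi; case: (s1); case: (s2) => //=; case: (a i); case: (b i).
  subst s2; congr pair; apply/setP => x.
  have /setP/(_ (val x)) := congr1 clause_vars E.
  by rewrite !clause_vars_falsifying_clause !in_setU1 (negbTE (valP x)) !(mem_imset _ _ val_inj).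
rewrite -card_dom -(card_in_imset clause_inj); apply: subset_leq_card.
apply/fintype.subsetP => _ /imsetP [[s A] + ->]; rewrite !inE => /eqP cardA.
rewrite /is_dclause -/(clause_vars _) clause_vars_falsifying_clause card_through_i cardA.
rewrite (prednK d_gt0) eqxx /=.
case: (s) => /=; rewrite (negbTE (falsifying_clause_unsat _ _)).
- by rewrite (falsifying_clause_sat _ abi) ?setU11.
- by rewrite (falsifying_clause_sat (i := i)) ?setU11 // eq_sym.
Qed.

Lemma card_dclauses_ge : (0 < d <= n)%N -> 2 * 'C(n.-1, d.-1) <= #|dclauses|.
Proof.
case/andP => d_gt0 dn; have n_gt0 : 0 < n := leq_trans d_gt0 dn.
pose a : assignment n := [ffun=> false]; pose b : assignment n := [ffun=> true].
have abi : a (Ordinal n_gt0) != b (Ordinal n_gt0) by rewrite !ffunE.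
apply: leq_trans (card_separating_clauses d_gt0 abi) (subset_leq_card _).
by apply/fintype.subsetP => c; rewrite inE => /andP [].
Qed.

End Clauses.

Section Formulas.
Variables n d m : nat.

Definition dformulas : {set formula n m} := [set F | is_dformula d F].

Definition equal_rows_dformulas : {set formula n m} :=
  [set F in dformulas | ~~ rows_distinct F].

Lemma card_dformulas : #|dformulas| = #|dclauses n d| ^ m.
Proof.
rewrite -[in RHS](card_ord m) -card_ffun_on; apply: eq_card => F.
by rewrite !inE; apply/forallP/ffun_onP => dF i; move: (dF i); rewrite inE.
Qed.

Lemma equal_rows_separating (F : formula n m) (a b : assignment n) :
  [ffun i => unsat_matrix F a i] = [ffun i => unsat_matrix F b i] ->
  forall i, F i \notin separating_clauses d a b.
Proof.
move=> /ffunP Eab i; move: (Eab i); rewrite !ffunE /unsat_matrix => /negb_inj Ei.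
by rewrite inE Ei eqxx andbF.
Qed.

Lemma card_equal_rows_dformulas_le : 0 < d ->
  #|equal_rows_dformulas| <= 4 ^ n * (#|dclauses n d| - 2 * 'C(n.-1, d.-1)) ^ m.
Proof.
move=> d_gt0.
pose nonseparating a b := dclauses n d :\: separating_clauses d a b.
pose avoiding a b := [set F : formula n m | F \in ffun_on (nonseparating a b)].
have sub : equal_rows_dformulas \subset
    \bigcup_(p : assignment n * assignment n | p.1 != p.2) avoiding p.1 p.2.
  apply/fintype.subsetP => F; rewrite !inE => /andP [/forallP dF].
  rewrite negb_forall => /existsP [a]; rewrite negb_forall => /existsP [b].
  rewrite negb_imply negbK => /andP [ab /eqP Eab].
  apply/bigcupP; exists (a, b) => //; rewrite inE; apply/ffun_onP => i.
  by rewrite inE (equal_rows_separating Eab) inE dF.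
have card_avoiding a b : a != b ->
    #|avoiding a b| <= (#|dclauses n d| - 2 * 'C(n.-1, d.-1)) ^ m.
  move=> ab; have [i abi] : exists i, a i != b i.
    by apply/existsP; apply: contraR ab => /existsPn ab; apply/eqP/ffunP => i; apply/eqP/negPn.
  rewrite cardsE card_ffun_on card_ord.
  elim: m => // k IHk; rewrite !expnS leq_mul //.
  rewrite -(cardsID (separating_clauses d a b) (dclauses n d)) -/(nonseparating a b).
  rewrite (finset.setIidPr _); last by apply/fintype.subsetP => c; rewrite inE => /andP [].
  by rewrite addnC -addnBA ?leq_addr // (card_separating_clauses d_gt0 abi).
apply: leq_trans (subset_leq_card sub) _; apply: leq_trans (@card_big_setU _ _ _ _ _) _.
apply: leq_trans (leq_sum _ (fun p => card_avoiding p.1 p.2)) _.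
rewrite sum_nat_cond_const leq_mul2r (leq_trans (max_card _)) ?orbT //.
by rewrite card_prod card_ffun card_bool card_ord -expnMn.
Qed.

End Formulas.

Local Open Scope ring_scope.

Lemma prob_rows_distinctE (R : realType) n d m : (0 < #|dformulas n d m|)%N ->
  prob_rows_distinct R n m d =
  1 - #|equal_rows_dformulas n d m|%:R / #|dformulas n d m|%:R.
Proof.
move=> tot_gt0.
have partition : #|[set F : formula n m | is_dformula d F && rows_distinct F]|%:R
    = #|dformulas n d m|%:R - #|equal_rows_dformulas n d m|%:R :> R.
  have -> : equal_rows_dformulas n d m = dformulas n d m :\: [set F | rows_distinct F].
    by apply/setP => F; rewrite !inE andbC.
  rewrite -(cardsID [set F | rows_distinct F] (dformulas n d m)) natrD addrK.
  by congr _%:R; apply: eq_card => F; rewrite !inE andbC.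
by rewrite /prob_rows_distinct partition mulrBl divff // pnatr_eq0 -lt0n.
Qed.

Lemma prob_rows_distinct_le1 (R : realType) n d m : prob_rows_distinct R n m d <= 1.
Proof.
rewrite /prob_rows_distinct -/(dformulas n d m).
have [->|tot_gt0] := posnP #|dformulas n d m|; first by rewrite invr0 mulr0.
rewrite ler_pdivrMr ?ltr0n // mul1r ler_nat subset_leq_card //.
by apply/fintype.subsetP => F; rewrite !inE => /andP [].
Qed.

Lemma bin_pred_ratio (R : numFieldType) n d : (0 < d <= n)%N ->
  'C(n.-1, d.-1)%:R / 'C(n, d)%:R = d%:R / n%:R :> R.
Proof.
case/andP => d_gt0 dn; have n_gt0 : (0 < n)%N := leq_trans d_gt0 dn.
apply/eqP; rewrite eqr_div ?pnatr_eq0 -?lt0n ?bin_gt0 // -!natrM.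
by rewrite mulnC mul_bin_diag prednK.
Qed.

Lemma equal_rows_ratio_le (R : realType) n d m : (0 < d <= n)%N ->
  #|equal_rows_dformulas n d m|%:R / #|dformulas n d m|%:R
    <= 4 ^+ n * expR (- (2 * d%:R / (n%:R * 2 ^+ d))) ^+ m :> R.
Proof.
move=> dn; have /andP [d_gt0 d_le_n] := dn.
set q : R := 2 * d%:R / (n%:R * 2 ^+ d).
set K := #|dclauses n d|; set s := (2 * 'C(n.-1, d.-1))%N.
have sK : (s <= K)%N := card_dclauses_ge dn.
have s_gt0 : (0 < s)%N by rewrite muln_gt0 bin_gt0; lia.
have K_gt0 : 0 < K%:R :> R by rewrite ltr0n (leq_trans s_gt0).
have q_le : q <= s%:R / K%:R.
  rewrite ler_pdivlMr //; apply: le_trans (_ : q * (2 ^ d * 'C(n, d))%:R <= _).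
    by rewrite ler_wpM2l ?divr_ge0 ?mulr_ge0 ?ler_nat ?card_dclauses_le.
  have Cn_neq0 : 'C(n, d)%:R != 0 :> R by rewrite pnatr_eq0 -lt0n bin_gt0.
  have n_neq0 : n%:R != 0 :> R by rewrite pnatr_eq0 -lt0n; lia.
  have C1E : 'C(n.-1, d.-1)%:R = d%:R / n%:R * 'C(n, d)%:R :> R.
    by rewrite -(bin_pred_ratio R dn) divfK.
  rewrite /q /s !natrM natrX C1E le_eqVlt; apply/orP; left; apply/eqP.
  by field; rewrite n_neq0 expf_neq0 ?pnatr_eq0.
rewrite card_dformulas natrX ler_pdivrMr ?exprn_gt0 //.
apply: le_trans (_ : (4 ^ n * (K - s) ^ m)%N%:R <= _).
  by rewrite ler_nat card_equal_rows_dformulas_le.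
rewrite natrM !natrX natrB // -mulrA ler_wpM2l ?exprn_ge0 // -exprMn.
rewrite lerXn2r ?nnegrE ?subr_ge0 ?ler_nat ?mulr_ge0 ?expR_ge0 //.
have -> : K%:R - s%:R = (1 - s%:R / K%:R) * K%:R :> R.
  by rewrite mulrBl mul1r divfK ?gt_eqF.
rewrite ler_wpM2r ?ler0n //; apply: le_trans (expR_ge1Dx _).
by rewrite lerD2l lerN2.
Qed.

Lemma prob_rows_distinct_ge (R : realType) (c : R) n d m : (0 < d <= n)%N ->
  c * 2 ^+ d * n%:R ^+ 2 / d%:R <= m%:R ->
  1 - (4 * expR (- (2 * c))) ^+ n <= prob_rows_distinct R n m d.
Proof.
move=> dn hm; have /andP [d_gt0 d_le_n] := dn.
have tot_gt0 : (0 < #|dformulas n d m|)%N.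
  rewrite card_dformulas expn_gt0 (leq_trans _ (card_dclauses_ge dn)) //.
  by rewrite muln_gt0 bin_gt0; lia.
rewrite prob_rows_distinctE // lerD2l lerN2 (le_trans (equal_rows_ratio_le R m dn)) //.
rewrite exprMn ler_wpM2l ?exprn_ge0 // -!expRM_natl ler_expR !mulrN lerN2.
set q : R := 2 * d%:R / (n%:R * 2 ^+ d).
have n_neq0 : n%:R != 0 :> R by rewrite pnatr_eq0 -lt0n; lia.
have d_neq0 : d%:R != 0 :> R by rewrite pnatr_eq0 -lt0n.
apply: le_trans (_ : c * 2 ^+ d * n%:R ^+ 2 / d%:R * q <= _); last first.
  by rewrite ler_wpM2r // divr_ge0 ?mulr_ge0.
rewrite le_eqVlt; apply/orP; left; apply/eqP.
by rewrite /q; field; rewrite n_neq0 d_neq0 expf_neq0 ?pnatr_eq0.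
Qed.

Local Open Scope classical_set_scope.

Theorem mainTheorem8 (R : realType) (c : R) (d m : nat -> nat) :
  c > 2 / log2 (expR 1) ->
  (exists N : nat, forall n : nat, (N <= n)%N ->
     [/\ (1 <= d n)%N, (d n <= n)%N &
         c * 2 ^+ d n * (n%:R) ^+ 2 / (d n)%:R <= (m n)%:R]) ->
  (fun n => prob_rows_distinct R n (m n) (d n)) @ \oo --> (1 : R).
Proof.
move=> hc [N HN].
have ln2_lt_c : 2 * ln (2 : R) < c by move: hc; rewrite /log2 expRK div1r invrK.
set rho := 4 * expR (- (2 * c)).
have rho_ge0 : 0 <= rho by rewrite mulr_ge0 ?expR_ge0.
have rho_lt1 : rho < 1.
  have -> : rho = expR (2 * ln 2 - 2 * c).
    by rewrite expRD expRM_natl lnK ?posrE // -natrX.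
  have ln2_gt0 : 0 < ln (2 : R) by rewrite ln_gt0 ?ltr1n.
  rewrite expR_lt1; lra.
apply: (@squeeze_cvgr _ _ _ _ (fun n => 1 - rho ^+ n) (fun _ => 1)).
- exists N => // n /= Nn; have [d_gt0 d_le_n hm] := HN n Nn.
  by rewrite prob_rows_distinct_ge ?d_gt0 ?prob_rows_distinct_le1.
- rewrite -[X in _ --> X]subr0; apply: cvgB; first exact: cvg_cst.
  by apply: cvg_expr; rewrite ger0_norm.
- exact: cvg_cst.
Qed.
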